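(* Let $(\hat q(k))_{k\ge1}$ be a sequence of positive numbers. (1) If for all $k$ large enough $$\hat q(k)\ge\frac{1}{1+\frac{1-p}{p}Q(k)}\Big(\sum_{i=1}^{\lfloor (k-1)/2\rfloor}q(i)\hat q(k-i)+\frac{1-p}{2p}q(k)^2+\mathbf 1_{\{k\text{ even}\}}\tfrac12 q(k/2)^2\Big),$$ then there is $C>0$ with $q(k)\le C\hat q(k)$ for all $k\ge1$. (2) If for all $k$ large enough $$\hat q(k)\le\frac{1}{1+\frac{1-p}{p}Q(k)}\sum_{i=1}^{\lfloor (k-1)/2\rfloor}q(i)\hat q(k-i),$$ then there is $c>0$ with $c\,\hat q(k)\le q(k)$ for all $k\ge1$.
   Context: A sign-decorated binary tree is a finite planar rooted tree in which every internal vertex (node) has exactly two ordered children and carries a sign $\oplus$ or $\ominus$; $\mathrm{LIS}(t)$ is the maximal number of leaves in a set of leaves whose pairwise highest common ancestors all carry $\oplus$. Fix $p\in(0,1)$. $T$ is a critical binary Bienaymé–Galton–Watson tree with i.i.d. node signs, $\mathbb P(\oplus)=p$; $q(k)=\mathbb P(\mathrm{LIS}(T)=k)>0$, $Q(k)=\mathbb P(\mathrm{LIS}(T)\ge k)$. These satisfy, for $k\ge2$, $q(k)=(1-p)q(k)\sum_{i=1}^{k-1}q(i)+p\sum_{i=1}^{\lfloor(k-1)/2\rfloor}q(i)q(k-i)+\frac{1-p}2q(k)^2+\mathbf 1_{\{k\text{ even}\}}\frac p2 q(k/2)^2$. *)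

From HB Require Import structures.
From mathcomp Require Import all_boot all_order all_algebra.
From mathcomp Require Import all_classical all_reals all_analysis.
Set Implicit Arguments. Unset Strict Implicit. Unset Printing Implicit Defensive.
Import Order.TTheory GRing.Theory Num.Theory.
Local Open Scope ring_scope.

(* Sign-decorated (full) binary planar trees: every internal node has exactly
   two ordered children (left, right) and a sign; [true] = (+), [false] = (-). *)
Inductive stree : Type :=
| Leaf : stree
| Node : bool -> stree -> stree -> stree.

(* Vertices are addressed by paths from the root: false = left, true = right. *)
Fixpoint leaves (t : stree) : seq (seq bool) :=
  match t with
  | Leaf => [:: [::]]
  | Node _ l r => map (cons false) (leaves l) ++ map (cons true) (leaves r)
  end.

Fixpoint sign_at (t : stree) (w : seq bool) : option bool :=
  match t, w with
  | Leaf, _ => None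
  | Node s _ _, [::] => Some s
  | Node _ l r, b :: w' => sign_at (if b then r else l) w'
  end.

(* longest common prefix of two addresses = address of highest common ancestor *)
Fixpoint lcp (u v : seq bool) : seq bool :=
  match u, v with
  | a :: u', b :: v' => if a == b then a :: lcp u' v' else [::]
  | _, _ => [::]
  end.

Definition leaf_at (t : stree) (i : nat) : seq bool := nth [::] (leaves t) i.

Definition LIS (t : stree) : nat :=
  \max_(A : {set 'I_(size (leaves t))} |
          [forall i in A, forall j in A,
             (i != j) ==> (sign_at t (lcp (leaf_at t i) (leaf_at t j)) == Some true)])
     #|A|.

Fixpoint nplus (t : stree) : nat :=
  match t with Leaf => 0 | Node s l r => (s : nat) + nplus l + nplus r end.
Fixpoint nminus (t : stree) : nat :=
  match t with Leaf => 0 | Node s l r => (~~ s : nat) + nminus l + nminus r end.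
Fixpoint nvert (t : stree) : nat :=
  match t with Leaf => 1 | Node _ l r => (nvert l + nvert r).+1 end.

(* Probability that the critical binary BGW tree (offspring 0 or 2, each w.p. 1/2)
   with i.i.d. signs (P(+) = p) equals the finite sign-decorated tree t. *)
Definition weight {R : realType} (p : R) (t : stree) : R :=
  (2^-1) ^+ nvert t * p ^+ nplus t * (1 - p) ^+ nminus t.

Fixpoint trees_upto (h : nat) : seq stree :=
  match h with
  | 0 => [:: Leaf]
  | h'.+1 => Leaf :: flatten [seq [seq Node s l r | l <- trees_upto h', r <- trees_upto h']
                             | s <- [:: true; false]]
  end.

(* q(k) = P(LIS(T) = k) = lim_h P(LIS(T) = k, height(T) <= h). *)
Definition qLIS {R : realType} (p : R) (k : nat) : R :=
  limn (fun h => \sum_(t <- trees_upto h | LIS t == k) weight p t).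

Definition QLIS {R : realType} (p : R) (k : nat) : R :=
  limn (fun h => \sum_(t <- trees_upto h | (k <= LIS t)%N) weight p t).

(* LIS(l (+) r) = LIS l + LIS r and LIS(l (-) r) = max (LIS l) (LIS r).  Conditioning
   on the root of the tree truncated at height h and letting h go to infinity (the total
   mass tends to 1, the only fixed point of x = (1 + x^2)/2) yields the recursion for q,
   which after division by p reads
     q(k) (1 + (1-p)/p Q(k)) = sum_(1 <= i <= (k-1)/2) q(i) q(k-i) + e(k),   e(k) >= 0.
   Both claims are instances of one comparison principle for such half-convolution
   inequalities, proved by strong induction on k: the inductive step only involves the
   values at k - i < k, and the constant is chosen large enough for the finitely many k
   below the threshold. *)

From HB Require Import structures.
From mathcomp Require Import all_boot all_order all_algebra.
From mathcomp Require Import all_classical all_reals all_analysis.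
From mathcomp Require Import zify ring lra.
Import Order.TTheory GRing.Theory Num.Theory.
Import numFieldNormedType.Exports.

Set Implicit Arguments.
Unset Strict Implicit.
Unset Printing Implicit Defensive.

Fixpoint lis (t : stree) : nat :=
  match t with
  | Leaf => 1
  | Node s l r => if s then lis l + lis r else maxn (lis l) (lis r)
  end.

Lemma lis_gt0 t : 0 < lis t.
Proof. by elim: t => [|[] l Hl r Hr] //=; rewrite ?addn_gt0 ?leq_max Hl. Qed.

Lemma lcpC (u v : seq bool) : lcp u v = lcp v u.
Proof. by elim: u v => [|a u IH] [|b v] //=; rewrite eq_sym; case: eqP => // ->; rewrite IH. Qed.

Definition plus_linked t i j := sign_at t (lcp (leaf_at t i) (leaf_at t j)) == Some true.

Definition plus_clique t (s : seq nat) :=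
  [/\ uniq s, {in s, forall i, i < size (leaves t)}
    & {in s &, forall i j, i != j -> plus_linked t i j}].

Section NodeLeaves.
Variables (s : bool) (l r : stree).
Let nl := size (leaves l).
Let nr := size (leaves r).

Lemma size_leaves_Node : size (leaves (Node s l r)) = nl + nr.
Proof. by rewrite /= size_cat !size_map. Qed.

Lemma leaf_at_Node_l i : i < nl -> leaf_at (Node s l r) i = false :: leaf_at l i.
Proof. by move=> Hi; rewrite /leaf_at /= nth_cat size_map Hi (nth_map [::]). Qed.

Lemma leaf_at_Node_r i : nl <= i < nl + nr ->
  leaf_at (Node s l r) i = true :: leaf_at r (i - nl).
Proof.
move=> /andP[H1 H2]; rewrite /leaf_at /= nth_cat size_map ltnNge H1 /=.
by rewrite (nth_map [::]) //; lia.
Qed.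

Lemma plus_linked_Node_l i j : i < nl -> j < nl ->
  plus_linked (Node s l r) i j = plus_linked l i j.
Proof. by move=> Hi Hj; rewrite /plus_linked !leaf_at_Node_l. Qed.

Lemma plus_linked_Node_r i j : nl <= i < nl + nr -> nl <= j < nl + nr ->
  plus_linked (Node s l r) i j = plus_linked r (i - nl) (j - nl).
Proof. by move=> Hi Hj; rewrite /plus_linked !leaf_at_Node_r. Qed.

Lemma plus_linked_Node_lr i j : i < nl -> nl <= j < nl + nr ->
  plus_linked (Node s l r) i j = s.
Proof. by move=> Hi Hj; rewrite /plus_linked leaf_at_Node_l // leaf_at_Node_r //=; case: s. Qed.

Lemma plus_clique_Node_l c : plus_clique l c -> plus_clique (Node s l r) c.
Proof.
case=> Hu Hb Hp; split => // [i /Hb|i j Hi Hj Hij]; first by rewrite size_leaves_Node; lia.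
by rewrite plus_linked_Node_l ?Hb //; apply: Hp.
Qed.

Lemma plus_clique_Node_r c : plus_clique r c -> plus_clique (Node s l r) (map (addn nl) c).
Proof.
case=> Hu Hb Hp; split.
- by rewrite map_inj_uniq //; apply: addnI.
- by move=> k /mapP[i /Hb Hi ->]; rewrite size_leaves_Node; lia.
move=> i' j' /mapP[i Hi ->] /mapP[j Hj ->] Hij.
have := Hb _ Hi; have := Hb _ Hj => Hj' Hi'.
rewrite plus_linked_Node_r ?addKn; try by apply/andP; split; lia.
by apply: Hp => //; apply: contra Hij => /eqP ->.
Qed.

Lemma plus_clique_Node_split c : plus_clique (Node s l r) c ->
  let cl := [seq i <- c | i < nl] in
  let cr := [seq i - nl | i <- c & nl <= i] in
  [/\ plus_clique l cl, plus_clique r cr, size c = size cl + size cr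
    & ~~ s -> cl = [::] \/ cr = [::]].
Proof.
case=> Hu Hb Hp cl cr.
have Hb' i : i \in c -> i < nl + nr by move/Hb; rewrite size_leaves_Node.
split.
- split; first by rewrite filter_uniq.
    by move=> i; rewrite mem_filter => /andP[].
  move=> i j; rewrite !mem_filter => /andP[Hi Hci] /andP[Hj Hcj] Hij.
  by rewrite -(plus_linked_Node_l Hi Hj); apply: Hp.
- split.
  + rewrite map_inj_in_uniq ?filter_uniq // => i j.
    by rewrite !mem_filter => /andP[Hi _] /andP[Hj _]; lia.
  + move=> k /mapP[i]; rewrite mem_filter => /andP[Hi /Hb'] Hi2 ->; lia.
  move=> i' j' /mapP[i]; rewrite mem_filter => /andP[Hi Hci] ->.
  move=> /mapP[j]; rewrite mem_filter => /andP[Hj Hcj] -> Hij.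
  have := Hb' _ Hci; have := Hb' _ Hcj => Hj' Hi'.
  rewrite -plus_linked_Node_r; try by apply/andP; split.
  by apply: Hp => //; apply: contra Hij => /eqP ->.
- by rewrite size_map !size_filter -(count_predC (fun i => i < nl)); congr (_ + _);
    apply: eq_count => i /=; rewrite -leqNgt.
move=> Hs; case Ecl: cl => [|i cl']; [by left | right].
case Ecr: cr => [//|j cr']; exfalso.
have : i \in cl by rewrite Ecl inE eqxx.
have : j \in cr by rewrite Ecr inE eqxx.
move=> /mapP[j']; rewrite mem_filter => /andP[Hj' Hcj'] _.
rewrite mem_filter => /andP[Hi Hci].
have Hij : i != j' by apply/eqP => Eij; rewrite Eij in Hi; lia.
have := Hp _ _ Hci Hcj' Hij; rewrite plus_linked_Node_lr ?(negbTE Hs) //.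
by apply/andP; split => //; apply: Hb'.
Qed.

End NodeLeaves.

Lemma plus_clique_cat l r c1 c2 : plus_clique l c1 -> plus_clique r c2 ->
  plus_clique (Node true l r) (c1 ++ map (addn (size (leaves l))) c2).
Proof.
move=> C1 C2; have [Hu1 Hb1 Hp1] := plus_clique_Node_l true r C1.
have [Hu2 Hb2 Hp2] := plus_clique_Node_r true l C2.
have [_ Hl _] := C1; have [_ Hr _] := C2.
have across i j : i \in c1 -> j \in map (addn (size (leaves l))) c2 ->
    plus_linked (Node true l r) i j.
  move=> Hi /mapP[j' Hj' ->]; rewrite plus_linked_Node_lr ?Hl //.
  by have := Hr _ Hj'; lia.
split.
- rewrite cat_uniq Hu1 Hu2 andbT; apply/hasPn => _ /mapP[j Hj ->].
  by apply/negP => /Hl; lia.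
- by move=> i; rewrite mem_cat => /orP[/Hb1|/Hb2].
move=> i j; rewrite !mem_cat => /orP[Hi|Hi] /orP[Hj|Hj] Hij.
- exact: Hp1.
- exact: across.
- by rewrite /plus_linked lcpC; apply: across.
- exact: Hp2.
Qed.

Lemma plus_clique_size_le t c : plus_clique t c -> size c <= lis t.
Proof.
elim: t c => [|s l IHl r IHr] c.
  case=> Hu Hb _; rewrite (@uniq_leq_size _ c [:: 0]) // => i /Hb.
  by rewrite ltnS leqn0 inE.
move=> /plus_clique_Node_split[/IHl Hl /IHr Hr -> Hs] /=.
case: s Hs => [_|/(_ isT)[E|E]]; first exact: leq_add.
  by rewrite E add0n leq_max Hr orbT.
by rewrite E addn0 leq_max Hl.
Qed.

Lemma exists_plus_clique_lis t : exists2 c, plus_clique t c & size c = lis t.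
Proof.
elim: t => [|s l [c1 C1 E1] r [c2 C2 E2]].
  exists [:: 0] => //; split => // [i|i j]; rewrite !inE => /eqP-> //.
  by move=> /eqP->; rewrite eqxx.
case: s => /=.
  by exists (c1 ++ map (addn (size (leaves l))) c2);
    rewrite ?size_cat ?size_map ?E1 ?E2 //; apply: plus_clique_cat.
case: (leqP (lis r) (lis l)) => H.
  by exists c1; first exact: plus_clique_Node_l.
exists (map (addn (size (leaves l))) c2); first exact: plus_clique_Node_r.
by rewrite size_map.
Qed.

Lemma LIS_lis t : LIS t = lis t.
Proof.
apply/eqP; rewrite eqn_leq; apply/andP; split.
  apply/bigmax_leqP => A HA; rewrite cardE -(size_map val).
  apply: plus_clique_size_le; split.
  - by rewrite map_inj_uniq ?enum_uniq //; apply: val_inj.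
  - by move=> k /mapP[i _ ->]; apply: ltn_ord.
  move=> i' j' /mapP[i Hi ->] /mapP[j Hj ->] Hij.
  rewrite mem_enum in Hi; rewrite mem_enum in Hj.
  by move: HA => /forallP/(_ i)/implyP/(_ Hi)/forallP/(_ j)/implyP/(_ Hj)/implyP; apply.
have [c [Hu Hb Hp] <-] := exists_plus_clique_lis t.
set c' := pmap (insub : nat -> option 'I_(size (leaves t))) c.
have Hc' : size c' = size c.
  by rewrite size_pmap_sub; apply/eqP; rewrite -all_count; apply/allP.
rewrite -Hc' -(card_uniqP _) ?pmap_sub_uniq // -cardsE.
apply: (leq_bigmax_cond [set i in c']); apply/forallP => i; apply/implyP.
rewrite inE mem_pmap_sub => Hi; apply/forallP => j; apply/implyP.
by rewrite inE mem_pmap_sub => Hj; apply/implyP => Hij; apply: Hp.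
Qed.

Local Open Scope classical_set_scope.
Local Open Scope ring_scope.

Lemma natr_eq_add (R : pzSemiRingType) (a b k : nat) :
  ((a + b == k)%N%:R : R) = \sum_(i < k.+1) (a == i)%:R * (b == k - i)%N%:R.
Proof.
case: (leqP a k) => Hak.
  rewrite (bigD1 (Ordinal (Hak : (a < k.+1)%N))) //= eqxx mul1r big1 ?addr0.
    by congr (_%:R); apply/eqP/eqP; lia.
  move=> i /eqP Hi; suff /negbTE-> : a != i by rewrite mul0r.
  by apply: contra_not_neq Hi => Ea; apply: val_inj.
have /negbTE-> : (a + b != k)%N by lia.
rewrite big1 // => i _.
have /negbTE-> : a != i by have := ltn_ord i; lia.
by rewrite mul0r.
Qed.

Lemma natr_eq_maxn (R : pzSemiRingType) (a b k : nat) :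
  ((maxn a b == k)%:R : R) =
  (a == k)%:R * (b < k)%N%:R + (a < k)%N%:R * (b == k)%:R + (a == k)%:R * (b == k)%:R.
Proof.
have E : (maxn a b == k : nat) = ((a == k) * (b < k) + (a < k) * (b == k) + (a == k) * (b == k))%N
  by lia.
by rewrite E !natrD !natrM.
Qed.

Lemma limn_shiftS (R : realType) (u : nat -> R) (l : R) :
  (fun h => u h.+1) @ \oo --> l -> limn u = l.
Proof. by move=> H; apply: cvg_lim => //; rewrite -cvg_shiftS. Qed.

Section Mass.
Variables (R : realType) (p : R).
Hypothesis p01 : 0 <= p <= 1.

Lemma weight_Leaf : weight p Leaf = 2^-1.
Proof. by rewrite /weight /= expr1 !expr0 !mulr1. Qed.

Lemma weight_Node s l r :
  weight p (Node s l r) = 2^-1 * (if s then p else 1 - p) * weight p l * weight p r.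
Proof. by rewrite /weight /=; case: s; rewrite /= ?add0n ?add1n !exprS !exprD; ring. Qed.

Lemma weight_ge0 t : 0 <= weight p t.
Proof.
case/andP: p01 => p0 p1.
by rewrite /weight !mulr_ge0 ?exprn_ge0 ?invr_ge0 ?subr_ge0.
Qed.

Lemma big_trees_upto_S h (g : stree -> R) :
  \sum_(t <- trees_upto h.+1) g t = g Leaf +
  \sum_(l <- trees_upto h) \sum_(r <- trees_upto h) (g (Node true l r) + g (Node false l r)).
Proof.
rewrite /= big_cons cats0 big_cat !big_allpairs_dep; congr (_ + _).
by symmetry; under eq_bigr do rewrite big_split; rewrite big_split.
Qed.

Lemma big_trees_upto_leS h (g : stree -> R) : (forall t, 0 <= g t) ->
  \sum_(t <- trees_upto h) g t <= \sum_(t <- trees_upto h.+1) g t.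
Proof.
elim: h g => [|h IH] g g0.
  by rewrite big_trees_upto_S big_seq1 lerDl !big_seq1 addr_ge0.
rewrite (big_trees_upto_S h) (big_trees_upto_S h.+1) lerD2l.
apply: le_trans (IH _ _) => [|l]; last by rewrite sumr_ge0 // => r _; rewrite addr_ge0.
by apply: ler_sum => l _; apply: IH => r; rewrite addr_ge0.
Qed.

Definition mass h (P : pred nat) : R :=
  \sum_(t <- trees_upto h) (P (lis t))%:R * weight p t.

Lemma mass_filter h (P : pred nat) :
  \sum_(t <- trees_upto h | P (LIS t)) weight p t = mass h P.
Proof.
rewrite big_mkcond; apply: eq_bigr => t _; rewrite LIS_lis.
by case: (P _); rewrite ?mul1r ?mul0r.
Qed.

Lemma mass_ge0 h P : 0 <= mass h P.
Proof. by apply: sumr_ge0 => t _; rewrite mulr_ge0 ?weight_ge0. Qed.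

Lemma mass_leS h P : mass h P <= mass h.+1 P.
Proof. by apply: big_trees_upto_leS => t; rewrite mulr_ge0 ?weight_ge0. Qed.

Lemma mass_le_total h P : mass h P <= mass h predT.
Proof. by apply: ler_sum => t _; rewrite ler_wpM2r ?weight_ge0 ?lern1 ?leq_b1. Qed.

Lemma mass_predC h P : mass h P + mass h (predC P) = mass h predT.
Proof. rewrite -big_split; apply: eq_bigr => t _ /=.
by case: (P _); rewrite /= ?mul1r ?mul0r ?addr0 ?add0r. Qed.

Lemma mass_eq0 h : mass h (pred1 0%N) = 0.
Proof. by rewrite /mass big1 // => t _; rewrite /= eqn0Ngt lis_gt0 mul0r. Qed.

Lemma sum_mass_mul h (P Q : pred nat) :
  \sum_(l <- trees_upto h) \sum_(r <- trees_upto h)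
      (P (lis l))%:R * (Q (lis r))%:R * weight p l * weight p r
  = mass h P * mass h Q.
Proof.
rewrite /mass big_distrl; apply: eq_bigr => l _ /=; rewrite big_distrr.
by apply: eq_bigr => r _ /=; ring.
Qed.

Lemma mass_S h P : mass h.+1 P = (P 1%N)%:R / 2 +
  p / 2 * \sum_(l <- trees_upto h) \sum_(r <- trees_upto h)
      (P (lis l + lis r)%N)%:R * weight p l * weight p r +
  (1 - p) / 2 * \sum_(l <- trees_upto h) \sum_(r <- trees_upto h)
      (P (maxn (lis l) (lis r)))%:R * weight p l * weight p r.
Proof.
rewrite /mass big_trees_upto_S /= weight_Leaf -addrA; congr (_ + _).
rewrite !mulr_sumr -big_split; apply: eq_bigr => l _.
by rewrite !mulr_sumr -big_split; apply: eq_bigr => r _; rewrite !weight_Node /=; ring.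
Qed.

Lemma mass_total_S h : mass h.+1 predT = 2^-1 + 2^-1 * mass h predT ^+ 2.
Proof.
have sq (f : stree -> stree -> nat) : \sum_(l <- trees_upto h) \sum_(r <- trees_upto h)
    (predT (f l r))%:R * weight p l * weight p r = mass h predT ^+ 2.
  rewrite expr2 -sum_mass_mul; apply: eq_bigr => l _; apply: eq_bigr => r _.
  by rewrite /= mulr1.
by rewrite mass_S !(sq (fun l r => lis l)) /=; field.
Qed.

Lemma mass_eq_S h k : mass h.+1 (pred1 k) = (1 == k)%:R / 2 +
  p / 2 * \sum_(i < k.+1) mass h (pred1 (i : nat)) * mass h (pred1 (k - i)%N) +
  (1 - p) / 2 * (2 * mass h (pred1 k) * mass h (fun n => n < k)%N + mass h (pred1 k) ^+ 2).
Proof.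
rewrite mass_S; congr (_ + _ * _ + _ * _).
- under [RHS]eq_bigr do rewrite -sum_mass_mul.
  rewrite [RHS]exchange_big; apply: eq_bigr => l _.
  rewrite [RHS]exchange_big; apply: eq_bigr => r _ /=.
  by rewrite natr_eq_add !mulr_suml.
- set a := mass h (pred1 k); set b := mass h _.
  have -> : 2 * a * b + a ^+ 2 = a * b + b * a + a * a by ring.
  rewrite -!sum_mass_mul -!big_split; apply: eq_bigr => l _.
  rewrite -!big_split; apply: eq_bigr => r _ /=.
  by rewrite natr_eq_maxn; ring.
Qed.

Lemma mass_total_le1 h : mass h predT <= 1.
Proof.
elim: h => [|h IH]; first by rewrite /mass big_seq1 mul1r weight_Leaf invf_le1 ?ler1n.
rewrite mass_total_S; have := mass_ge0 h predT.
have : mass h predT ^+ 2 <= 1 by rewrite expr_le1 ?mass_ge0.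
lra.
Qed.

Lemma mass_nondecreasing P : nondecreasing_seq (mass^~ P).
Proof. by apply/nondecreasing_seqP => h; apply: mass_leS. Qed.

Lemma mass_cvg P : cvgn (mass^~ P).
Proof.
apply: nondecreasing_is_cvgn; first exact: mass_nondecreasing.
by exists 1 => _ [h _ <-]; apply: le_trans (mass_le_total h P) (mass_total_le1 h).
Qed.

Lemma mass_le_lim h P : mass h P <= limn (mass^~ P).
Proof. by apply: nondecreasing_cvgn_le; [apply: mass_nondecreasing | apply: mass_cvg]. Qed.

Lemma lim_mass_total : limn (mass^~ predT) = 1.
Proof.
set L := limn _.
have HL : L = 2^-1 + 2^-1 * L ^+ 2.
  apply: limn_shiftS; under eq_fun do rewrite mass_total_S expr2; rewrite expr2.
  by apply: cvgD; [exact: cvg_cst | apply: cvgM; [exact: cvg_cst | apply: cvgM; apply: mass_cvg]].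
have : (L - 1) ^+ 2 = 2 * (2^-1 + 2^-1 * L ^+ 2 - L) by field.
by rewrite -HL subrr mulr0 => /eqP; rewrite sqrf_eq0 subr_eq0 => /eqP.
Qed.

Lemma mass_ltn h k : mass h (fun n => n < k)%N = mass h predT - mass h (fun n => k <= n)%N.
Proof.
apply/eqP; rewrite eq_sym subr_eq; apply/eqP.
rewrite -big_split; apply: eq_bigr => t _ /=.
by case: ltnP; rewrite /= ?mul1r ?mul0r ?addr0 ?add0r.
Qed.

Lemma qLIS_mass k : qLIS p k = limn (mass^~ (pred1 k)).
Proof. by apply: (congr1 (fun u => limn u)); apply/funext => h; apply: mass_filter. Qed.

Lemma QLIS_mass k : QLIS p k = limn (mass^~ (fun n => k <= n)%N).
Proof. by apply: (congr1 (fun u => limn u)); apply/funext => h; apply: mass_filter. Qed.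

Lemma qLIS_ge0 k : 0 <= qLIS p k.
Proof. by rewrite qLIS_mass; apply: le_trans (mass_le_lim 0 _); apply: mass_ge0. Qed.

Lemma QLIS_ge0 k : 0 <= QLIS p k.
Proof. by rewrite QLIS_mass; apply: le_trans (mass_le_lim 0 _); apply: mass_ge0. Qed.

Lemma qLIS0 : qLIS p 0 = 0.
Proof. by rewrite qLIS_mass; under eq_fun do rewrite mass_eq0; apply: lim_cst. Qed.

Lemma qLIS1_ge : 2^-1 <= qLIS p 1.
Proof.
rewrite qLIS_mass; apply: le_trans (mass_le_lim 0 _).
by rewrite /mass big_seq1 mul1r weight_Leaf.
Qed.

Lemma qLIS_rec k : (2 <= k)%N ->
  qLIS p k = p / 2 * \sum_(i < k.+1) qLIS p i * qLIS p (k - i)%N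
    + (1 - p) / 2 * (2 * qLIS p k * (1 - QLIS p k) + qLIS p k ^+ 2).
Proof.
move=> k2.
have cq i : mass^~ (pred1 i) @ \oo --> qLIS p i by rewrite qLIS_mass; apply: mass_cvg.
have cQ : mass^~ (fun n => k <= n)%N @ \oo --> QLIS p k by rewrite QLIS_mass; apply: mass_cvg.
have c1 : mass^~ predT @ \oo --> (1 : R) by rewrite -lim_mass_total; apply: mass_cvg.
have k_neq1 : (1 == k) = false by lia.
rewrite {1}qLIS_mass expr2; apply: limn_shiftS.
under eq_fun do rewrite mass_eq_S mass_ltn expr2 k_neq1 mul0r add0r.
apply: cvgD; apply: cvgM; try exact: cvg_cst.
  by apply: cvg_big => // [|i _]; [exact: add_continuous | exact: cvgM].
apply: cvgD; last exact: cvgM.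
by apply: cvgM; [apply: cvgM; [exact: cvg_cst | exact: cq] | exact: cvgB].
Qed.

End Mass.

Definition half_conv (R : pzSemiRingType) (c f : nat -> R) k :=
  \sum_(1 <= i < ((k - 1)./2).+1) c i * f (k - i)%N.

Lemma sum_ord_pairs (R : nmodType) n (odd_len : bool) (F : nat -> R) :
  \sum_(i < (2 * n + odd_len)%N) F i =
  \sum_(i < n) (F i + F (2 * n + odd_len - 1 - i)%N) + (if odd_len then F n else 0).
Proof.
elim: n F => [|n IH] F; first by case: odd_len; rewrite /= ?big_ord1 !big_ord0 ?add0r ?addr0.
have -> : (2 * n.+1 + odd_len = (2 * n + odd_len).+2)%N by lia.
rewrite big_ord_recl big_ord_recr /= (IH (fun i => F i.+1)) big_ord_recl /=.
have -> : ((2 * n + odd_len).+2 - 1 - 0 = (2 * n + odd_len).+1)%N by lia.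
rewrite [in RHS](eq_bigr (fun i : 'I_n => F i.+1 + F (2 * n + odd_len - 1 - i).+1)); last first.
  by move=> i _; congr (_ + F _); rewrite /bump; have := ltn_ord i; lia.
by rewrite -!addrA; congr (_ + _); rewrite addrA addrC.
Qed.

Lemma sum_conv_sym (R : comPzSemiRingType) (f : nat -> R) k : f 0%N = 0 -> (1 <= k)%N ->
  \sum_(i < k.+1) f i * f (k - i)%N = 2 * half_conv f f k + (if ~~ odd k then f k./2 ^+ 2 else 0).
Proof.
move=> f0 k1; rewrite /half_conv; move Em: ((k - 1)./2) => m.
have -> : (k.+1 = 2 * m.+1 + ~~ odd k)%N by lia.
rewrite (sum_ord_pairs _ _ (fun i => f i * f (k - i)%N)); congr (_ + _).
  rewrite big_add1 /= big_mkord big_ord_recl /= subn0 f0 mul0r add0r mulr_sumr.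
  have -> : (2 * m.+1 + ~~ odd k - 1 - 0 = k)%N by lia.
  rewrite subnn f0 mulr0 add0r; apply: eq_bigr => i _.
  have Hi : (i < m)%N := ltn_ord i.
  have -> : (2 * m.+1 + ~~ odd k - 1 - bump 0 i = k - i.+1)%N by rewrite /bump add1n; lia.
  have -> : (k - (k - i.+1) = i.+1)%N by lia.
  by rewrite mulr2n mulrDl mul1r mulrC.
case Ho: (odd k) => //=; have -> : (k./2 = m.+1)%N by lia.
by have -> : (k - m.+1 = m.+1)%N by lia.
Qed.

Section Recursion.
Variables (R : realType) (p : R).
Hypotheses (p_gt0 : 0 < p) (p_le1 : p <= 1).

Let p01 : 0 <= p <= 1. Proof. by rewrite p_le1 ltW. Qed.

Lemma QLIS_factor_gt0 k : 0 < 1 + (1 - p) / p * QLIS p k.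
Proof. by apply: ltr_pwDl; rewrite // mulr_ge0 ?divr_ge0 ?subr_ge0 ?(ltW p_gt0) ?(QLIS_ge0 p01). Qed.

Lemma qLIS_rec_half k : (2 <= k)%N ->
  qLIS p k * (1 + (1 - p) / p * QLIS p k) = half_conv (qLIS p) (qLIS p) k +
    ((1 - p) / (2 * p) * qLIS p k ^+ 2 + (if ~~ odd k then 2^-1 * qLIS p k./2 ^+ 2 else 0)).
Proof.
move=> k2; have := qLIS_rec p01 k2; rewrite sum_conv_sym ?qLIS0 //; last by lia.
have p_neq0 : p != 0 by rewrite gt_eqF.
set q := qLIS p k; set Q := QLIS p k; set S := half_conv _ _ _.
set a := if ~~ odd k then _ else _; set b := if ~~ odd k then _ else _.
have -> : b = a / 2 by rewrite /a /b; case: ifP; rewrite ?mul0r // mulrC.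
move=> E; apply/eqP; rewrite -subr_eq0; apply/eqP.
transitivity ((q - (p / 2 * (2 * S + a) + (1 - p) / 2 * (2 * q * (1 - Q) + q ^+ 2))) / p).
  by field.
by rewrite {1}E subrr mul0r.
Qed.

Lemma qLIS_gt0 k : (1 <= k)%N -> 0 < qLIS p k.
Proof.
elim/ltn_ind: k => k IH k1; case: (ltnP k 2) => k2.
  have -> : k = 1%N by lia.
  by apply: lt_le_trans (qLIS1_ge p01); rewrite invr_gt0.
rewrite -(pmulr_lgt0 _ (QLIS_factor_gt0 k)) qLIS_rec_half //.
have S_ge0 a : 0 <= \sum_(a <= i < ((k - 1)./2).+1) qLIS p i * qLIS p (k - i)%N.
  by rewrite big_seq sumr_ge0 // => i _; rewrite mulr_ge0 ?(qLIS_ge0 p01).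
have X_ge0 : 0 <= (1 - p) / (2 * p) * qLIS p k ^+ 2.
  by rewrite mulr_ge0 ?sqr_ge0 ?divr_ge0 ?subr_ge0 ?mulr_ge0 ?(ltW p_gt0).
case: ifPn => [even_k|odd_k].
  apply: ltr_wpDl (S_ge0 _) _; apply: ltr_wpDl X_ge0 _.
  by rewrite mulr_gt0 ?invr_gt0 ?exprn_gt0 // IH //; lia.
rewrite addr0 /half_conv big_ltn; last by rewrite negbK in odd_k; lia.
rewrite -addrA; apply: ltr_wpDr; first by rewrite addr_ge0.
by rewrite mulr_gt0 // IH //; lia.
Qed.

Lemma qLIS_excess_ge0 k :
  0 <= (1 - p) / (2 * p) * qLIS p k ^+ 2 + (if ~~ odd k then 2^-1 * qLIS p k./2 ^+ 2 else 0).
Proof.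
have w_ge0 : 0 <= (1 - p) / (2 * p) by rewrite divr_ge0 ?subr_ge0 ?mulr_ge0 ?(ltW p_gt0).
apply: addr_ge0; first by apply: mulr_ge0 => //; apply: sqr_ge0.
by case: ifP => _ //; apply: mulr_ge0; [rewrite invr_ge0 | apply: sqr_ge0].
Qed.

End Recursion.

Lemma half_conv_comparison (R : realFieldType) (c e D f g : nat -> R) (K : nat) :
    (forall i, 0 <= c i) -> (forall k, 0 <= e k) -> (forall k, 0 < D k) ->
    (forall k, (1 <= k)%N -> 0 <= f k) -> (forall k, (1 <= k)%N -> 0 < g k) ->
    (forall k, (K <= k)%N -> f k * D k <= half_conv c f k + e k) ->
    (forall k, (K <= k)%N -> half_conv c g k + e k <= g k * D k) ->
  exists2 C, 0 < C & forall k, (1 <= k)%N -> f k <= C * g k.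
Proof.
move=> c_ge0 e_ge0 D_gt0 f_ge0 g_gt0 f_rec g_rec.
pose M := \sum_(1 <= j < K) f j / g j.
have fg_ge0 j : (1 <= j)%N -> 0 <= f j / g j by move=> j1; rewrite divr_ge0 ?f_ge0 ?ltW ?g_gt0.
have M_ge0 : 0 <= M.
  by rewrite /M big_seq sumr_ge0 // => j; rewrite mem_index_iota => /andP[j1 _]; apply: fg_ge0.
(* The constant is at least 1 so that it also absorbs the inhomogeneous term [e]. *)
have C_ge1 : 1 <= 1 + M by rewrite lerDl.
exists (1 + M); first exact: lt_le_trans ltr01 C_ge1.
elim/ltn_ind => k IH k1; have gk := g_gt0 k k1.
case: (ltnP k K) => kK.
  rewrite -ler_pdivrMr // (le_trans _ (ler_wpDl ler01 (lexx M))) //.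
  rewrite /M (bigD1_seq k) ?mem_index_iota ?k1 ?iota_uniq //= lerDl big_seq_cond sumr_ge0 //.
  by move=> j; rewrite mem_index_iota => /andP[/andP[j1 _] _]; apply: fg_ge0.
have conv_le : half_conv c f k <= (1 + M) * half_conv c g k.
  rewrite /half_conv mulr_sumr; apply: ler_sum_nat => i /andP[i1 ik].
  by rewrite mulrCA ler_wpM2l // IH //; lia.
rewrite -(ler_pM2r (D_gt0 k)) -mulrA (le_trans (f_rec k kK)) //.
apply: le_trans (ler_wpM2l (ltW (lt_le_trans ltr01 C_ge1)) (g_rec k kK)).
by rewrite mulrDr lerD // ler_peMl.
Qed.

Theorem lemma8p2 (R : realType) (p : R) (hp0 : 0 < p) (hp1 : p < 1)
    (qhat : nat -> R) (hqhat : forall k : nat, (1 <= k)%N -> 0 < qhat k) :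
  ((exists K : nat, forall k : nat, (K <= k)%N ->
      qhat k >= (1 + (1 - p) / p * QLIS p k)^-1 *
        (\sum_(1 <= i < ((k - 1)./2).+1) qLIS p i * qhat (k - i)%N
         + (1 - p) / (2 * p) * qLIS p k ^+ 2
         + (if ~~ odd k then 2^-1 * qLIS p k./2 ^+ 2 else 0)))
   -> exists2 C : R, 0 < C & forall k : nat, (1 <= k)%N -> qLIS p k <= C * qhat k)
  /\
  ((exists K : nat, forall k : nat, (K <= k)%N ->
      qhat k <= (1 + (1 - p) / p * QLIS p k)^-1 *
        \sum_(1 <= i < ((k - 1)./2).+1) qLIS p i * qhat (k - i)%N)
   -> exists2 c : R, 0 < c & forall k : nat, (1 <= k)%N -> c * qhat k <= qLIS p k).
Proof.
have p01 : 0 <= p <= 1 by rewrite !ltW.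
have p_le1 := ltW hp1.
pose D k := 1 + (1 - p) / p * QLIS p k.
pose e k := (1 - p) / (2 * p) * qLIS p k ^+ 2 + (if ~~ odd k then 2^-1 * qLIS p k./2 ^+ 2 else 0).
have D_gt0 k : 0 < D k := QLIS_factor_gt0 hp0 p_le1 k.
have e_ge0 k : 0 <= e k := qLIS_excess_ge0 hp0 p_le1 k.
have q_ge0 i : 0 <= qLIS p i := qLIS_ge0 p01 i.
have q_rec k : (2 <= k)%N -> qLIS p k * D k = half_conv (qLIS p) (qLIS p) k + e k.
  exact: qLIS_rec_half.
split=> -[K HK].
- have q_sub k : (maxn K 2 <= k)%N -> qLIS p k * D k <= half_conv (qLIS p) (qLIS p) k + e k.
    by rewrite geq_max => /andP[_ /q_rec ->].
  have qhat_super k : (maxn K 2 <= k)%N -> half_conv (qLIS p) qhat k + e k <= qhat k * D k.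
    by rewrite geq_max => /andP[/HK Hk _]; rewrite /e addrA (mulrC (qhat k)) -ler_pdivrMl ?D_gt0.
  have [C C_gt0 HC] := half_conv_comparison q_ge0 e_ge0 D_gt0 (fun k _ => q_ge0 k) hqhat
    q_sub qhat_super.
  by exists C.
- have qhat_sub k : (maxn K 2 <= k)%N -> qhat k * D k <= half_conv (qLIS p) qhat k + 0.
    by rewrite geq_max => /andP[/HK Hk _]; rewrite addr0 (mulrC (qhat k)) -ler_pdivlMl ?D_gt0.
  have q_super k : (maxn K 2 <= k)%N -> half_conv (qLIS p) (qLIS p) k + 0 <= qLIS p k * D k.
    by rewrite geq_max => /andP[_ /q_rec ->]; rewrite addr0 lerDl.
  have [C C_gt0 HC] := half_conv_comparison q_ge0 (fun=> lexx 0) D_gt0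
    (fun k k1 => ltW (hqhat k k1)) (qLIS_gt0 hp0 p_le1) qhat_sub q_super.
  exists C^-1 => [|k k1]; first by rewrite invr_gt0.
  by rewrite ler_pdivrMl // HC.
Qed.
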